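(* Let $N\ge2$. For an integer $M\ge1$ and $q\in[0,1]^M$ say that $q$ satisfies $(E_M)$ if $M+(d^2-1)\sum_{i=1}^Mq_i=d(d-1)+\frac{(\sum_{i=1}^M\sqrt{(d^2-1)q_i+1})^2}{M+d-1}$. Let $p\in[0,1]^{N-1}$ satisfy $(E_{N-1})$. Then $(p,0)\in[0,1]^N$ satisfies $(E_N)$ if and only if $p=e_i$ for some $1\le i\le N-1$, where $e_i$ is the $i$-th standard basis vector of $\mathbb R^{N-1}$.
   Context: $d\ge2$ is an integer (the Hilbert space dimension). *)

From HB Require Import structures.
From mathcomp Require Import all_boot all_order all_algebra.
From mathcomp Require Import reals.
Set Implicit Arguments. Unset Strict Implicit. Unset Printing Implicit Defensive.
Import Order.TTheory GRing.Theory Num.Theory.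
Local Open Scope ring_scope.

Definition in_unit_cube (R : realType) (M : nat) (q : 'I_M -> R) : Prop :=
  forall i, 0 <= q i <= 1.

Definition condE (R : realType) (d M : nat) (q : 'I_M -> R) : Prop :=
  M%:R + (d%:R ^+ 2 - 1) * (\sum_(i < M) q i)
  = d%:R * (d%:R - 1)
    + (\sum_(i < M) Num.sqrt ((d%:R ^+ 2 - 1) * q i + 1)) ^+ 2
      / (M + d - 1)%:R.

(* (p, 0) : the vector of length n+1 obtained by appending a zero to p *)
Definition ext0 (R : realType) (n : nat) (p : 'I_n -> R) : 'I_n.+1 -> R :=
  fun j => match unlift ord_max j with Some k => p k | None => 0 end.

Definition std_basis (R : realType) (n : nat) (i : 'I_n) : 'I_n -> R :=
  fun j => (j == i)%:R.

From HB Require Import structures.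
From mathcomp Require Import all_boot all_order all_algebra.
From mathcomp Require Import reals.
From mathcomp Require Import lra zify ring.
Import Order.TTheory GRing.Theory Num.Theory.
Set Implicit Arguments. Unset Strict Implicit. Unset Printing Implicit Defensive.
Local Open Scope ring_scope.

(* Put D = d^2 - 1, a_i = sqrt(D p_i + 1) in [1, d],
   S = sum_i a_i and K = n + d - 1.  Appending a zero coordinate adds 1 to
   the left-hand side of (E) and turns S^2/K into (S+1)^2/(K+1); given (E_n),
   (E_{n+1}) for (p, 0) is therefore equivalent to (S - K)^2 = 0, i.e. S = K
   (lemma [one_step_extension]).
   If S = K, then (E_n) yields sum_i (a_i - 1)(d - a_i) = 0; every term is
   nonnegative, so each a_i is 1 or d, and sum_i (a_i - 1) = d - 1 forces
   exactly one a_i = d (lemma [one_hot_of_sums]); a_i = 1 means p_i = 0 and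
   a_i = d means p_i = 1.  Conversely p = e_i gives S = d + (n - 1) = K. *)

Lemma sum_ext0 (R : realType) (V : nmodType) (n : nat) (p : 'I_n -> R)
    (F : R -> V) :
  \sum_(j < n.+1) F (ext0 p j) = \sum_(i < n) F (p i) + F 0.
Proof.
rewrite big_ord_recr /= /ext0 unlift_none; congr (_ + _).
apply: eq_bigr => i _.
have -> : widen_ord (leqnSn n) i = lift ord_max i.
  by apply/val_inj; rewrite /= /bump leqNgt ltn_ord.
by rewrite liftK.
Qed.

(* The algebraic heart of the extension step: if m + X = c + S^2/K, then
   adding 1 to m, S and K preserves the identity exactly when S = K, since
   the difference of the two sides is (S - K)^2 / (K (K + 1)). *)
Lemma one_step_extension (R : realFieldType) (m X c S K : R) : 0 < K ->
  m + X = c + S ^+ 2 / K ->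
  (m + 1 + X = c + (S + 1) ^+ 2 / (K + 1) <-> S = K).
Proof.
move=> K_gt0 E.
have K_neq0 : K != 0 by rewrite gt_eqF.
have K1_neq0 : K + 1 != 0 by rewrite gt_eqF // ltr_wpDr.
have u_mulK : S ^+ 2 / K * K = S ^+ 2 by rewrite divfK.
have v_mulK : (S + 1) ^+ 2 / (K + 1) * (K + 1) = (S + 1) ^+ 2 by rewrite divfK.
split => [E1|SK].
  set u := S ^+ 2 / K in E u_mulK; set v := (S + 1) ^+ 2 / (K + 1) in E1 v_mulK.
  have uv : v = u + 1 by lra.
  have /eqP : (S - K) ^+ 2 = 0 by rewrite uv in v_mulK; nra.
  by rewrite sqrf_eq0 subr_eq0 => /eqP.
have sqK (x : R) : x != 0 -> x ^+ 2 / x = x by move=> ?; rewrite expr2 mulfK.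
move: E; rewrite SK !sqK //; lra.
Qed.

Lemma one_hot_of_sums (R : realFieldType) (n : nat) (c : R) (a : 'I_n -> R) :
  1 < c -> (forall i, 1 <= a i <= c) ->
  \sum_i (a i - 1) * (c - a i) = 0 -> \sum_i a i = n%:R + c - 1 ->
  exists i, forall j, a j = if j == i then c else 1.
Proof.
move=> c_gt1 a_bnd prod0 sum_a.
have sum1 : \sum_i (a i - 1) = c - 1.
  by rewrite sumrB sum_a sumr_const card_ord -[n%:R]mulr1 mulr_natl; lra.
have a1_ge0 k : 0 <= a k - 1 by have /andP[] := a_bnd k; rewrite subr_ge0.
have a_extreme k : a k = 1 \/ a k = c.
  have /eqP : (a k - 1) * (c - a k) = 0.
    apply: (psumr_eq0P _ prod0) => // j _; apply: mulr_ge0 => //.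
    by have /andP[_] := a_bnd j; rewrite subr_ge0.
  by rewrite mulf_eq0 !subr_eq0 => /orP[] /eqP ->; [left | right].
have [i ai_neq1] : exists i, a i != 1.
  case: (pickP (fun i => a i != 1)) => [i ?|all1]; first by exists i.
  move: sum1; rewrite big1 => [|i _]; first lra.
  by move: (all1 i) => /negbFE/eqP ->; rewrite subrr.
have ai_c : a i = c by case: (a_extreme i) => // ai1; rewrite ai1 eqxx in ai_neq1.
have rest0 : \sum_(j | j != i) (a j - 1) = 0.
  by move: sum1; rewrite (bigD1 i) //= ai_c; lra.
exists i => j; case: eqVneq => [-> //|ji].
by apply/eqP; rewrite -subr_eq0; apply/eqP; apply: (psumr_eq0P _ rest0).
Qed.

Section CoordinateMap.
Variables (R : realType) (d : nat).
Hypothesis d_ge2 : (2 <= d)%N.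

Definition sqcoord (x : R) : R := Num.sqrt ((d%:R ^+ 2 - 1) * x + 1).

Lemma dsq1_gt0 : 0 < d%:R ^+ 2 - 1 :> R.
Proof. have : (2 : R) <= d%:R by rewrite (ler_nat R 2 d). nra. Qed.

Lemma sqcoord_sqr (x : R) : 0 <= x -> sqcoord x ^+ 2 = (d%:R ^+ 2 - 1) * x + 1.
Proof. by move=> x_ge0; rewrite sqr_sqrtr // addr_ge0 // mulr_ge0 // ltW // dsq1_gt0. Qed.

Lemma sqcoord_bounds (x : R) : 0 <= x <= 1 -> 1 <= sqcoord x <= d%:R.
Proof.
move=> /andP[x_ge0 x_le1]; have D_gt0 := dsq1_gt0.
apply/andP; split; rewrite /sqcoord.
  by rewrite -{1}sqrtr1 ler_sqrt; nra.
rewrite -[leRHS](ger0_norm (ler0n R d)) -[leRHS]sqrtr_sqr ler_sqrt; nra.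
Qed.

Lemma sqcoord0 : sqcoord 0 = 1.
Proof. by rewrite /sqcoord mulr0 add0r sqrtr1. Qed.

Lemma sqcoord1 : sqcoord 1 = d%:R.
Proof. by rewrite /sqcoord mulr1 subrK sqrtr_sqr ger0_norm ?ler0n. Qed.

Lemma sqcoord_inj (x y : R) : 0 <= x -> 0 <= y -> sqcoord x = sqcoord y -> x = y.
Proof.
move=> x_ge0 y_ge0 eq_xy; have := congr1 (fun t => t ^+ 2) eq_xy.
rewrite /= !sqcoord_sqr // => /addIr /mulfI; apply; exact/lt0r_neq0/dsq1_gt0.
Qed.

End CoordinateMap.

Lemma condE_ext0_iff (R : realType) (d n : nat) (p : 'I_n -> R) :
  (2 <= d)%N -> condE d p ->
  condE d (ext0 p) <-> \sum_i sqcoord d (p i) = (n + d - 1)%:R.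
Proof.
move=> d_ge2 E.
have K_gt0 : 0 < (n + d - 1)%:R :> R by rewrite ltr0n; lia.
have K_succ : (n.+1 + d - 1)%:R = (n + d - 1)%:R + 1 :> R.
  by rewrite natr1; congr _%:R; lia.
rewrite -(one_step_extension K_gt0 E) /condE.
rewrite (sum_ext0 p id) (sum_ext0 p (sqcoord d)) sqcoord0 K_succ -natr1 /=.
by rewrite addr0.
Qed.

(* When S = K, (E_n) becomes sum_i (a_i - 1)(d - a_i) = 0 for a_i = sqcoord p_i:
   expand using a_i^2 = (d^2 - 1) p_i + 1. *)
Lemma condE_deviation (R : realType) (d n : nat) (p : 'I_n -> R) :
  (2 <= d)%N -> in_unit_cube p -> condE d p ->
  \sum_i sqcoord d (p i) = (n + d - 1)%:R ->
  \sum_i (sqcoord d (p i) - 1) * (d%:R - sqcoord d (p i)) = 0.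
Proof.
move=> d_ge2 cube E S_eq.
set a := fun i => sqcoord d (p i); set D : R := d%:R ^+ 2 - 1.
set K : R := (n + d - 1)%:R in S_eq.
have K_val : K = n%:R + d%:R - 1 by rewrite /K natrB ?natrD //; lia.
have sum_sq : \sum_i a i ^+ 2 = D * \sum_(i < n) p i + n%:R.
  rewrite (eq_bigr _ (fun i _ => sqcoord_sqr d_ge2 (proj1 (andP (cube i))))).
  by rewrite big_split /= -mulr_sumr sumr_const card_ord.
have E' : n%:R + D * \sum_(i < n) p i = d%:R * (d%:R - 1) + K ^+ 2 / K.
  by move: E; rewrite /condE -/D -/K -S_eq.
have sqK : K ^+ 2 / K = K by rewrite expr2 mulfK // lt0r_neq0 // /K ltr0n; lia.
have expand : \sum_i (a i - 1) * (d%:R - a i)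
    = (d%:R + 1) * \sum_i a i - \sum_i a i ^+ 2 - \sum_(i < n) (d%:R : R).
  by rewrite mulr_sumr -!sumrB; apply: eq_bigr => i _; ring.
rewrite expand sum_sq S_eq sumr_const card_ord; rewrite sqK in E'.
rewrite -mulr_natr; move: E'; rewrite K_val; lra.
Qed.

(* For a standard basis vector e_i the transformed coordinates are one d and
   n - 1 ones, so their sum is exactly n + d - 1. *)
Lemma sum_sqcoord_std_basis (R : realType) (d n : nat) (i : 'I_n) :
  \sum_j sqcoord d (std_basis R i j) = (n + d - 1)%:R.
Proof.
have coord j : sqcoord d (std_basis R i j) = if j == i then d%:R else 1.
  by rewrite /std_basis; case: eqVneq => _; rewrite ?sqcoord1 ?sqcoord0.
rewrite (eq_bigr _ (fun j _ => coord j)) (bigD1 i) //= eqxx.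
rewrite (eq_bigr (fun=> 1)) => [|j /negbTE -> //].
have := ltn_ord i; rewrite sumr_const cardC1 card_ord -natrD => ?.
by congr _%:R; lia.
Qed.

Theorem mainTheorem17 (R : realType) (d n : nat) (hd : (2 <= d)%N)
  (hN : (2 <= n.+1)%N) (p : 'I_n -> R) :
  in_unit_cube p -> condE d p ->
  (condE d (ext0 p) <-> exists i : 'I_n, forall j, p j = std_basis R i j).
Proof.
move=> cube E; rewrite (condE_ext0_iff hd E).
have d_gt1 : 1 < d%:R :> R by rewrite ltr1n.
have p_ge0 j : 0 <= p j by have /andP[] := cube j.
split => [S_eq | [i p_ei]].
- have [|i one_hot] := one_hot_of_sums d_gt1 (fun j => sqcoord_bounds hd (cube j))
    (condE_deviation hd cube E S_eq).
    by rewrite /= S_eq natrB ?natrD //; lia.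
  exists i => j; rewrite /std_basis; move: (one_hot j).
  by case: eqVneq => _ /=; [rewrite -(sqcoord1 R d) | rewrite -(sqcoord0 R d)];
    apply: sqcoord_inj.
- by rewrite (eq_bigr _ (fun j _ => congr1 (sqcoord d) (p_ei j))) sum_sqcoord_std_basis.
Qed.
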